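(* Let $(G,\preceq)$ be a nontrivial left-ordered group whose Conradian soul is trivial. Then $\preceq$ is an accumulation point, in $\mathcal{LO}(G)$, of the set of its conjugates $\{\preceq_h: h\in G\}$.
   Context: A left-ordering is a total order invariant under left multiplication; it is Conradian if for all $f\succ id$, $g\succ id$ there is $n\in\mathbb{N}$ with $fg^n\succ g$. The Conradian soul of $(G,\preceq)$ is the maximal $\preceq$-convex subgroup (convex: $f_1\prec h\prec f_2$, $f_i$ in it, implies $h$ in it) on which $\preceq$ restricts to a Conradian ordering. The conjugate $\preceq_h$ is defined by $g\succ_h id$ iff $hgh^{-1}\succ id$. $\mathcal{LO}(G)$ is the space of left-orderings with the topology in which basic neighbourhoods of $\preceq$ are the sets of left-orderings agreeing with $\preceq$ on a given finite subset of $G$. *)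

From Stdlib Require Import List.
Set Implicit Arguments.

Record Group := {
  carrier :> Type;
  gmul : carrier -> carrier -> carrier;
  gone : carrier;
  ginv : carrier -> carrier;
  gmulA : forall a b c, gmul a (gmul b c) = gmul (gmul a b) c;
  gmul1l : forall a, gmul gone a = a;
  gmul1r : forall a, gmul a gone = a;
  gmulVl : forall a, gmul (ginv a) a = gone;
  gmulVr : forall a, gmul a (ginv a) = gone
}.

Section Defs.
Variable G : Group.
Local Notation "a * b" := (gmul G a b).
Local Notation one := (gone G).
Local Notation "a ^-1" := (ginv G a) (at level 3).

Fixpoint gpow (g : G) (n : nat) : G :=
  match n with O => one | S k => g * gpow g k end.

Definition left_ordering (le : G -> G -> Prop) : Prop :=
  (forall a, le a a) /\
  (forall a b, le a b -> le b a -> a = b) /\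
  (forall a b c, le a b -> le b c -> le a c) /\
  (forall a b, le a b \/ le b a) /\
  (forall a b c, le a b -> le (c * a) (c * b)).

Definition lt_of (le : G -> G -> Prop) (a b : G) : Prop := le a b /\ a <> b.

Definition subgroup (H : G -> Prop) : Prop :=
  H one /\ (forall a b, H a -> H b -> H (a * b)) /\ (forall a, H a -> H (a^-1)).

Definition convex (le : G -> G -> Prop) (H : G -> Prop) : Prop :=
  forall f1 h f2, H f1 -> H f2 -> lt_of le f1 h -> lt_of le h f2 -> H h.

Definition conradian_on (le : G -> G -> Prop) (H : G -> Prop) : Prop :=
  forall f g, H f -> H g -> lt_of le one f -> lt_of le one g ->
    exists n : nat, lt_of le g (f * gpow g (S n)).

Definition conradian_soul (le : G -> G -> Prop) (H : G -> Prop) : Prop :=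
  subgroup H /\ convex le H /\ conradian_on le H /\
  (forall K, subgroup K -> convex le K -> conradian_on le K ->
     forall x, K x -> H x).

(* The conjugate ordering le_h: positive cone {g | h g h^-1 > id};
   a <=_h b iff a = b or a^-1 b >_h id. *)
Definition conj_le (le : G -> G -> Prop) (h : G) (a b : G) : Prop :=
  a = b \/ lt_of le one (h * (a^-1 * b) * h^-1).

Definition agree_on (le1 le2 : G -> G -> Prop) (F : list G) : Prop :=
  forall a b, In a F -> In b F -> (le1 a b <-> le2 a b).

(* le is an accumulation point in LO(G) of {le_h : h in G}: every basic
   neighbourhood of le contains some le_h different from le. *)
Definition accumulation_of_conjugates (le : G -> G -> Prop) : Prop :=
  forall F : list G, exists h : G,
    agree_on le (conj_le le h) F /\
    exists a b : G, ~ (le a b <-> conj_le le h a b).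

End Defs.

Arguments gpow {G}.
Arguments left_ordering {G}.
Arguments lt_of {G}.
Arguments subgroup {G}.
Arguments convex {G}.
Arguments conradian_on {G}.
Arguments conradian_soul {G}.
Arguments conj_le {G}.
Arguments agree_on {G}.
Arguments accumulation_of_conjugates {G}.

(* A conjugate ordering [le_h] equals [le] exactly when conjugation by [h]
   preserves the positive cone.  The elements [y] all of whose order-interval
   [[1, y]] consists of such cone-preserving elements form a convex subgroup on
   which the ordering is bi-invariant, hence Conradian; a trivial Conradian soul
   therefore forces every interval [[1, g]], [g > 1], to contain an [x] with
   [le_x <> le].  Given a finite set F, take [g] below every positive quotient
   [a^-1 b] of elements of F: conjugating by [x^-1] for such an [x] keeps these
   quotients positive, so [le_(x^-1)] agrees with [le] on F but differs from it. *)
From Stdlib Require Import List Classical.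
Set Implicit Arguments.
Unset Strict Implicit.

Local Notation "a * b" := (gmul _ a b).
Local Notation "a ^-1" := (ginv _ a) (at level 3).

Section GroupFacts.
Variable G : Group.
Local Notation one := (gone G).

Lemma inv_uniq (a b : G) : a * b = one -> b = a^-1.
Proof.
  intro H. rewrite <- (gmul1l G b), <- (gmulVl G a), <- gmulA, H, gmul1r.
  reflexivity.
Qed.

Lemma invK (a : G) : (a^-1)^-1 = a.
Proof. symmetry. apply inv_uniq, gmulVl. Qed.

Lemma inv1 : one^-1 = one.
Proof. symmetry. apply inv_uniq, gmul1l. Qed.

Lemma invM (a b : G) : (a * b)^-1 = b^-1 * a^-1.
Proof.
  symmetry. apply inv_uniq.
  rewrite <- gmulA, (gmulA G b), gmulVr, gmul1l, gmulVr. reflexivity.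
Qed.

Lemma inv_conjg (h k : G) : (h * k * h^-1)^-1 = h * k^-1 * h^-1.
Proof. rewrite !invM, invK, gmulA. reflexivity. Qed.

Lemma mulKg (a b : G) : a^-1 * (a * b) = b.
Proof. rewrite gmulA, gmulVl, gmul1l. reflexivity. Qed.

Lemma mulVKg (a b : G) : a * (a^-1 * b) = b.
Proof. rewrite gmulA, gmulVr, gmul1l. reflexivity. Qed.

Lemma mulg_injl (a b c : G) : a * b = a * c -> b = c.
Proof. intro H. rewrite <- (mulKg a b), H, mulKg. reflexivity. Qed.

Lemma mulg_eq_l (a b : G) : a * b = b -> a = one.
Proof.
  intro H. apply (f_equal (fun u => u * b^-1)) in H.
  rewrite <- gmulA, !gmulVr, gmul1r in H. exact H.
Qed.

Lemma conjg1 (h : G) : h * one * h^-1 = one.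
Proof. rewrite gmul1r, gmulVr. reflexivity. Qed.

End GroupFacts.

Section LeftOrdering.
Variable G : Group.
Variable le : G -> G -> Prop.
Hypothesis Hlo : left_ordering le.
Local Notation one := (gone G).
Local Notation lt := (lt_of le).
Local Notation pos := (lt one).

Lemma le_refl a : le a a. Proof. apply Hlo. Qed.
Lemma le_anti a b : le a b -> le b a -> a = b. Proof. apply Hlo. Qed.
Lemma le_trans a b c : le a b -> le b c -> le a c. Proof. apply Hlo. Qed.
Lemma le_total a b : le a b \/ le b a. Proof. apply Hlo. Qed.
Lemma le_mul2l a b c : le a b -> le (c * a) (c * b). Proof. apply Hlo. Qed.

Lemma lt_mul2l a b c : lt a b -> lt (c * a) (c * b).
Proof.
  intros [H1 H2]. split; [now apply le_mul2l|].
  intro E. apply H2. exact (mulg_injl E).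
Qed.

Lemma le_mul_ge1 c w : le one w -> le c (c * w).
Proof. intro H. apply (le_mul2l c) in H. now rewrite gmul1r in H. Qed.

Lemma le_mul_le1 c w : le w one -> le (c * w) c.
Proof. intro H. apply (le_mul2l c) in H. now rewrite gmul1r in H. Qed.

Lemma not_lt_le a b : ~ lt a b -> le b a.
Proof.
  intro H. destruct (le_total a b) as [L|L]; auto.
  destruct (classic (a = b)) as [->|E]; [apply le_refl|].
  exfalso. apply H. now split.
Qed.

Lemma le_iff_pos a b : le a b <-> a = b \/ pos (a^-1 * b).
Proof.
  split.
  - intro H. destruct (classic (a = b)) as [E|E]; [now left|right].
    split; [rewrite <- (gmulVl G a); now apply le_mul2l|].
    intro E'. apply E. rewrite <- (mulVKg a b), <- E', gmul1r. reflexivity.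
  - intros [<-|[H _]]; [apply le_refl|].
    apply (le_mul2l a) in H. rewrite gmul1r, mulVKg in H. exact H.
Qed.

Lemma pos_inv_neg k : pos k -> lt (k^-1) one.
Proof. intro H. apply (lt_mul2l k^-1) in H. rewrite gmul1r, gmulVl in H. exact H. Qed.

Lemma neg_inv_pos k : lt k one -> pos (k^-1).
Proof. intro H. apply (lt_mul2l k^-1) in H. rewrite gmul1r, gmulVl in H. exact H. Qed.

Lemma pos_inv_not_pos k : pos k -> ~ pos (k^-1).
Proof.
  intros H1 H2. apply pos_inv_neg in H1. destruct H1 as [H1 _], H2 as [H2 E].
  apply E. now apply le_anti.
Qed.

Lemma not_pos_inv_pos k : k <> one -> ~ pos k -> pos (k^-1).
Proof. intros E N. apply neg_inv_pos. split; [now apply not_lt_le|exact E]. Qed.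

Lemma exists_pos : (exists g : G, g <> one) -> exists g, pos g.
Proof.
  intros [g E]. destruct (classic (pos g)) as [P|P]; [now exists g|].
  exists g^-1. now apply not_pos_inv_pos.
Qed.

Lemma exists_pos_lower_bound (L : list G) g0 : pos g0 ->
  exists g, pos g /\ forall d, In d L -> pos d -> le g d.
Proof.
  intro P0. induction L as [|d L [g [Pg Hg]]].
  - exists g0. split; [exact P0|]. intros d [].
  - destruct (classic (pos d)) as [Pd|Pd].
    + destruct (le_total g d) as [E|E].
      * exists g. split; [exact Pg|]. intros d' [<-|I] P; auto.
      * exists d. split; [exact Pd|]. intros d' [<-|I] P; [apply le_refl|].
        eapply le_trans; eauto.
    + exists g. split; [exact Pg|]. intros d' [<-|I] P; [contradiction|auto].
Qed.

(* [cone_invariant h] is the statement [le_h = le]. *)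
Definition cone_invariant (h : G) : Prop :=
  forall k, pos k <-> pos (h * k * h^-1).

Lemma cone_invariant1 : cone_invariant one.
Proof. intro k. rewrite gmul1l, inv1, gmul1r. tauto. Qed.

Lemma cone_invariantM a b :
  cone_invariant a -> cone_invariant b -> cone_invariant (a * b).
Proof.
  intros Ha Hb k. rewrite (Hb k), (Ha (b * k * b^-1)), invM, !gmulA. tauto.
Qed.

Lemma cone_invariantV a : cone_invariant a -> cone_invariant (a^-1).
Proof.
  intros Ha k. rewrite (Ha (a^-1 * k * a^-1^-1)), invK.
  rewrite !gmulA, gmulVr, gmul1l, <- gmulA, gmulVr, gmul1r. tauto.
Qed.

Lemma cone_invariant_lt_mul f k :
  cone_invariant k -> pos f -> lt k (f * k).
Proof.
  intros Hk Pf. apply (cone_invariantV Hk) in Pf. rewrite invK in Pf.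
  apply (lt_mul2l k) in Pf. rewrite gmul1r, <- gmulA, mulVKg in Pf. exact Pf.
Qed.

Lemma conj_le_differs h :
  ~ cone_invariant h -> exists a b, ~ (le a b <-> conj_le le h a b).
Proof.
  intro N. apply not_all_ex_not in N. destruct N as [k N].
  exists one, k. unfold conj_le. rewrite le_iff_pos, inv1, gmul1l. intro E. apply N.
  destruct (classic (one = k)) as [<-|Ek]; [rewrite conjg1; tauto|].
  split; intro X; [destruct (proj1 E (or_intror X)) | destruct (proj2 E (or_intror X))];
    tauto.
Qed.

Lemma conj_le_agree_on (F : list G) h :
  (forall a b, In a F -> In b F -> pos (a^-1 * b) -> pos (h * (a^-1 * b) * h^-1)) ->
  agree_on le (conj_le le h) F.
Proof.
  intros H a b Ia Ib. unfold conj_le. rewrite le_iff_pos.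
  destruct (classic (a = b)) as [<-|E]; [tauto|].
  destruct (classic (pos (a^-1 * b))) as [P|P]; [split; intros _; right; auto|].
  split; intros [X|X]; try contradiction. exfalso.
  assert (Eba : b^-1 * a = (a^-1 * b)^-1) by now rewrite invM, invK.
  assert (Pba : pos (b^-1 * a)).
  { rewrite Eba. apply not_pos_inv_pos; [|exact P].
    intro E'. apply E. rewrite <- (mulVKg a b), E', gmul1r. reflexivity. }
  apply H in Pba; [|exact Ib|exact Ia].
  rewrite Eba, <- inv_conjg in Pba. exact (pos_inv_not_pos X Pba).
Qed.

Definition between (y z : G) : Prop :=
  (le one z /\ le z y) \/ (le y z /\ le z one).

Definition invariant_interval (y : G) : Prop :=
  forall z, between y z -> cone_invariant z.

Lemma invariant_interval_invariant x : invariant_interval x -> cone_invariant x.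
Proof.
  intro H. apply H. destruct (le_total one x); [left|right]; split; auto using le_refl.
Qed.

Lemma invariant_interval_between u v z :
  (le u z /\ le z v) \/ (le v z /\ le z u) ->
  invariant_interval u -> invariant_interval v -> cone_invariant z.
Proof.
  intros B Cu Cv. destruct (le_total one z) as [Z|Z].
  - destruct B as [[B1 B2]|[B1 B2]]; [apply Cv|apply Cu]; left; auto.
  - destruct B as [[B1 B2]|[B1 B2]]; [apply Cu|apply Cv]; right; auto.
Qed.

Lemma between_mul2l c y z : between y z ->
  (le c (c * z) /\ le (c * z) (c * y)) \/ (le (c * y) (c * z) /\ le (c * z) c).
Proof.
  intros [[B1 B2]|[B1 B2]]; [left|right];
    split; auto using le_mul2l, le_mul_ge1, le_mul_le1.
Qed.

Lemma invariant_intervalV x : invariant_interval x -> invariant_interval (x^-1).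
Proof.
  intros Cx z B. apply (between_mul2l x) in B. rewrite gmulVr in B.
  rewrite <- (mulKg x z). apply cone_invariantM.
  - exact (cone_invariantV (invariant_interval_invariant Cx)).
  - apply Cx. destruct B as [[B1 B2]|[B1 B2]]; [right|left]; auto.
Qed.

Lemma invariant_intervalM x y :
  invariant_interval x -> invariant_interval y -> invariant_interval (x * y).
Proof.
  intros Cx Cy z B. apply (between_mul2l x^-1) in B. rewrite mulKg in B.
  rewrite <- (mulVKg x z). apply cone_invariantM.
  - exact (invariant_interval_invariant Cx).
  - exact (invariant_interval_between B (invariant_intervalV Cx) Cy).
Qed.

Lemma invariant_interval1 : invariant_interval one.
Proof.
  intros z [[B1 B2]|[B1 B2]];
    rewrite (le_anti B1 B2) || rewrite (le_anti B2 B1); apply cone_invariant1.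
Qed.

Lemma subgroup_invariant_interval : subgroup invariant_interval.
Proof.
  split; [apply invariant_interval1|split; [apply invariant_intervalM|apply invariant_intervalV]].
Qed.

Lemma convex_invariant_interval : convex le invariant_interval.
Proof.
  intros f1 h f2 C1 C2 [L1 _] [L2 _] z [[B1 B2]|[B1 B2]].
  - apply C2. left. split; [exact B1|]. eapply le_trans; eauto.
  - apply C1. right. split; [|exact B2]. eapply le_trans; eauto.
Qed.

(* The ordering is bi-invariant on this subgroup, so [n = 0] always works. *)
Lemma conradian_on_invariant_interval : conradian_on le invariant_interval.
Proof.
  intros f k _ Ck Pf _. exists 0. simpl. rewrite gmul1r.
  exact (cone_invariant_lt_mul (invariant_interval_invariant Ck) Pf).
Qed.

Lemma trivial_soul_noninvariant :
  conradian_soul le (fun x : G => x = one) ->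
  forall t, pos t -> exists x, le one x /\ le x t /\ ~ cone_invariant x.
Proof.
  intros [_ [_ [_ Max]]] t Pt. apply NNPP. intro N.
  assert (Ct : invariant_interval t).
  { intros z [[B1 B2]|[B1 B2]].
    - apply NNPP. intro Nz. apply N. now exists z.
    - rewrite (le_anti B2 (le_trans (proj1 Pt) B1)). apply cone_invariant1. }
  apply (proj2 Pt). symmetry.
  exact (Max _ subgroup_invariant_interval convex_invariant_interval
           conradian_on_invariant_interval t Ct).
Qed.

Lemma pos_conjV_of_le x d : le one x -> le x d -> pos d -> pos (x^-1 * d * x^-1^-1).
Proof.
  intros X1 Xd Pd. rewrite invK, <- gmulA.
  assert (Hx : lt x (d * x)).
  { split; [exact (le_trans Xd (le_mul_ge1 d X1))|].
    intro E. apply (proj2 Pd). symmetry. exact (mulg_eq_l (eq_sym E)). }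
  apply (lt_mul2l x^-1) in Hx. rewrite gmulVl in Hx. exact Hx.
Qed.

End LeftOrdering.

Definition differences (G : Group) (F : list G) : list G :=
  flat_map (fun a => map (fun b => a^-1 * b) F) F.

Lemma in_differences (G : Group) (F : list G) a b :
  In a F -> In b F -> In (a^-1 * b) (differences F).
Proof. intros Ia Ib. apply in_flat_map. exists a. split; [exact Ia|]. now apply in_map. Qed.

Theorem mainTheorem8 (G : Group) (le : G -> G -> Prop) :
  left_ordering le ->
  (exists g : G, g <> gone G) ->
  conradian_soul le (fun x : G => x = gone G) ->
  accumulation_of_conjugates le.
Proof.
  intros Hlo Hnt Soul F.
  destruct (exists_pos Hlo Hnt) as [g0 P0].
  destruct (exists_pos_lower_bound Hlo (differences F) P0) as [g [Pg Hg]].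
  destruct (trivial_soul_noninvariant Hlo Soul Pg) as [x [X1 [Xg Nx]]].
  exists x^-1. split.
  - apply (conj_le_agree_on Hlo). intros a b Ia Ib Pab.
    apply (pos_conjV_of_le Hlo X1); [|exact Pab].
    exact (le_trans Hlo Xg (Hg _ (in_differences Ia Ib) Pab)).
  - apply (conj_le_differs Hlo). intro Nx'. apply Nx.
    rewrite <- (invK x). exact (cone_invariantV Nx').
Qed.
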